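(* Let $\Psi\in\mathcal{H}$, and let $\ell_\Psi\in\mathbb{R}^2$ be its constant value on $\mathcal{S}_0$. Then there exists a family $(\tilde\Psi^\varepsilon)_{0<\varepsilon\le1}$ of smooth, compactly supported, divergence-free vector fields on $\overline{\mathcal{F}_0}$ such that $\tilde\Psi^\varepsilon=\ell_\Psi$ on $\partial\mathcal{S}_0$ for every $\varepsilon$, and $\|\nabla\tilde\Psi^\varepsilon\|_{L^\infty(\mathcal{F}_0)}\to0$ as $\varepsilon\to0^+$.
   Context: $\mathcal{S}_0$ is the closed unit disk in $\mathbb{R}^2$, $\mathcal{F}_0:=\mathbb{R}^2\setminus\mathcal{S}_0$, and $\mathcal{H}:=\{\Psi\in L^2(\mathbb{R}^2;\mathbb{R}^2):\operatorname{div}\Psi=0\text{ in }\mathbb{R}^2,\ \nabla\Psi=0\text{ in }\mathcal{S}_0\}$ (so each $\Psi\in\mathcal{H}$ is constant on $\mathcal{S}_0$). *)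

From HB Require Import structures.
From mathcomp Require Import all_boot all_order all_algebra.
From mathcomp Require Import all_classical all_reals all_analysis.
Set Implicit Arguments. Unset Strict Implicit. Unset Printing Implicit Defensive.
Import Order.TTheory GRing.Theory Num.Theory.
Import numFieldNormedType.Exports.
Local Open Scope classical_set_scope.
Local Open Scope ring_scope.

Section Defs.
Context {R : realType}.

Definition pt := (R * R)%type.
Definition sqn (x : pt) : R := x.1 ^+ 2 + x.2 ^+ 2.
Definition S0 : set pt := [set x | sqn x <= 1].
Definition S0int : set pt := [set x | sqn x < 1].
Definition F0 : set pt := [set x | 1 < sqn x].
Definition F0cl : set pt := [set x | 1 <= sqn x].

Definition dir (b : bool) : pt := if b then (1, 0) else (0, 1).
Definition pd (b : bool) (f : pt -> R) : pt -> R := fun x => 'D_(dir b) f x.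
Definition iter_pd (w : seq bool) (f : pt -> R) : pt -> R := foldr pd f w.
Definition vcomp (b : bool) (F : pt -> pt) : pt -> R :=
  fun x => if b then (F x).1 else (F x).2.

Definition smooth (f : pt -> R) : Prop :=
  forall w : seq bool, continuous (iter_pd w f) /\
    forall (b : bool) (x : pt), derivable (iter_pd w f) x (dir b).

Definition test_fun (U : set pt) (phi : pt -> R) : Prop :=
  smooth phi /\ exists K : set pt, compact K /\ K `<=` U /\
    forall x, ~ K x -> phi x = 0.

Definition leb2 := ((@lebesgue_measure R) \x (@lebesgue_measure R))%E.

Definition in_H (Psi : pt -> pt) : Prop :=
  (forall i, measurable_fun setT (vcomp i Psi)) /\
  (forall i, leb2.-integrable setT (fun x => ((vcomp i Psi x) ^+ 2)%:E)) /\
  (* div Psi = 0 in D'(R^2) *)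
  (forall phi, test_fun setT phi ->
     (\int[leb2]_x ((vcomp true Psi x * pd true phi x
                    + vcomp false Psi x * pd false phi x)%:E) = 0)%E) /\
  (* grad Psi = 0 in D'(interior of S_0) *)
  (forall phi, test_fun S0int phi -> forall i j,
     (\int[leb2]_x ((vcomp i Psi x * pd j phi x)%:E) = 0)%E).

End Defs.

From HB Require Import structures.
From mathcomp Require Import all_boot all_order all_algebra.
From mathcomp Require Import all_classical all_reals all_analysis.
From mathcomp Require Import ring lra.
Import Order.TTheory GRing.Theory Num.Theory.
Import numFieldNormedType.Exports.
Local Open Scope classical_set_scope.
Local Open Scope ring_scope.

(* Let [chi] be a smooth cutoff, equal to [1] on [(-oo, 2]] and to [0] on [[3, +oo)], built
   from [t |-> expR (- t^-1)].  The field is the rotated gradient of the stream function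
   [chi (eps^2 |x|^2) * (l.1 x.2 - l.2 x.1)], hence divergence free; it equals [l] on the
   unit circle, where the cutoff is [1], and vanishes for [|x|^2 > 3 / eps^2].  Its value at
   [x] is the value of the field for [eps = 1] at [eps x], so its gradient is [eps] times a
   continuous compactly supported, hence bounded, function. *)

Section OneVariable.
Context {R : realType}.
Implicit Types (f g u d : R -> R) (x t : R) (p : {poly R}).

Lemma scaleRE (a b : R) : a *: b = a * b. Proof. by []. Qed.

Fixpoint Cn (n : nat) (g : R -> R) : Prop :=
  match n with
  | 0 => continuous g
  | n.+1 => (forall x, derivable g x 1) /\ Cn n (derive1 g)
  end.

Lemma derivable1_continuous g x : derivable g x 1 -> {for x, continuous g}.
Proof. by move=> /derivable1_diffP /differentiable_continuous. Qed.

Lemma CnW n g : Cn n.+1 g -> Cn n g.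
Proof.
elim: n g => [|n IH] g [dg Hg] /=; first by move=> x; apply: derivable1_continuous.
by split => //; apply: IH.
Qed.

Lemma derive1_is_derive g d : (forall x, is_derive x 1 g (d x)) -> derive1 g = d.
Proof. by move=> H; apply: funext => x; rewrite derive1E derive_val. Qed.

Lemma Cn_cst n (c : R) : Cn n (fun=> c).
Proof.
elim: n c => [|n IH] c /=; first by move=> x; apply: cvg_cst.
split=> [x|]; first exact: derivable_cst.
by rewrite (@derive1_is_derive _ (fun=> 0)) // => x; apply: is_derive_cst.
Qed.

Lemma Cn_id n : Cn n id.
Proof.
case: n => [|n] /=; first by move=> x.
split; first by move=> x; apply: derivable_id.
by rewrite (@derive1_is_derive _ (fun=> 1)); first exact: Cn_cst.
Qed.

Lemma CnD n f g : Cn n f -> Cn n g -> Cn n (fun x => f x + g x).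
Proof.
elim: n f g => [|n IH] f g /=; first by move=> cf cg x; exact: (continuousD (cf x) (cg x)).
move=> [df Hf] [dg Hg]; split=> [x|]; first exact: derivableD.
suff -> : derive1 (fun x => f x + g x) = (fun x => derive1 f x + derive1 g x) by exact: IH.
by apply: derive1_is_derive => x /=; rewrite !derive1E; apply: is_deriveD.
Qed.

Lemma CnM n f g : Cn n f -> Cn n g -> Cn n (fun x => f x * g x).
Proof.
elim: n f g => [|n IH] f g /=; first by move=> cf cg x; exact: (continuousM (cf x) (cg x)).
move=> [df Hf] [dg Hg]; split=> [x|]; first exact: derivableM.
suff -> : derive1 (fun x => f x * g x) = (fun x => f x * derive1 g x + g x * derive1 f x).
  by apply: CnD; apply: IH => //; apply: CnW.
by apply: derive1_is_derive => x /=; rewrite !derive1E; apply: is_deriveM.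
Qed.

Lemma Cn_comp n g u : Cn n g -> Cn n u -> Cn n (g \o u).
Proof.
elim: n g u => [|n IH] g u /=; first by move=> cg cu x; apply: continuous_comp; [apply: cu|apply: cg].
move=> [dg Hg] [du Hu].
have Dgu x : is_derive x 1 (g \o u) (derive1 g (u x) * derive1 u x).
  by rewrite !derive1E; apply: is_derive1_comp.
split=> [x|]; first by case: (Dgu x).
rewrite (@derive1_is_derive _ _ Dgu).
by apply: (@CnM _ (derive1 g \o u)) => //; apply: IH => //; apply: CnW.
Qed.

Lemma CnV n d : (forall x, d x != 0) -> Cn n d -> Cn n (fun x => (d x)^-1).
Proof.
move=> d0; elim: n d d0 => [|n IH] d d0 /=; first by move=> cd x; exact: (continuousV (d0 x) (cd x)).
move=> [dd Hd]; split=> [x|]; first exact: derivableV.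
suff -> : derive1 (fun x => (d x)^-1) = (fun x => -1 * ((d x)^-1 * (d x)^-1) * derive1 d x).
  apply: (@CnM _ (fun x => -1 * ((d x)^-1 * (d x)^-1))) => //.
  apply: (@CnM _ (fun=> -1)); first exact: Cn_cst.
  by apply: (@CnM _ (fun x => (d x)^-1)); apply: IH => //; apply: CnW.
apply: derive1_is_derive => x; rewrite derive1E.
apply: is_derive_eq; first exact: (is_deriveV (d0 x) (derivableP (dd x))).
by rewrite scaleRE; field; exact: d0.
Qed.

Lemma Cn_affine n (a b : R) : Cn n (fun t => a * t + b).
Proof.
by apply: (@CnD _ (fun t => a * t)); [apply: (@CnM _ (fun=> a)); [apply: Cn_cst|apply: Cn_id]|apply: Cn_cst].
Qed.

Lemma normr_horner_le p (s : R) : 1 <= s ->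
  `|p.[s]| <= (\sum_(i < size p) `|p`_i|) * s ^+ size p.
Proof.
move=> s1; rewrite horner_coef mulr_suml.
apply: (le_trans (ler_norm_sum _ _ _)); apply: ler_sum => i _.
rewrite normrM ler_wpM2l // ger0_norm ?exprn_ge0 ?(le_trans _ s1) //.
by apply: ler_weXn2l => //; apply: ltnW.
Qed.

(* The bound comes from s ^+ (k + 2) <= (k + 2)! * expR s with s = t^-1. *)
Lemma horner_inv_expN_le p (e : R) : 0 < e -> exists2 d : R, 0 < d &
  forall t, 0 < t < d -> `|p.[t^-1] * expR (- t^-1)| <= e * t.
Proof.
move=> e0; set k := size p; set A := \sum_(i < k) `|p`_i|.
set C := A * (k.+2)`!%:R.
have A0 : 0 <= A by apply: sumr_ge0.
have C0 : 0 <= C by apply: mulr_ge0.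
exists (Num.min 1 (e / (C + 1))); first by rewrite lt_min ltr01 /= divr_gt0 // ltr_wpDl.
move=> t /andP[t0]; rewrite lt_min => /andP[t1 te].
set s := t^-1.
have s1 : 1 <= s by rewrite /s -invr1 lef_pV2 ?posrE // ltW.
have s0 : 0 < s by rewrite /s invr_gt0.
have st : s * t = 1 by rewrite /s mulVf // gt_eqF.
have s_exp : s ^+ k.+2 <= (k.+2)`!%:R * expR s.
  have := expR_ge1Dxn k.+1 (ltW s0).
  rewrite -ler_pdivrMl ?ltr0n ?fact_gt0 // => /(le_trans _); apply.
  by rewrite mulrC lerDr.
rewrite normrM (ger0_norm (expR_ge0 _)).
apply: (@le_trans _ _ (A * s ^+ k * expR (- s))).
  by rewrite ler_wpM2r ?expR_ge0 // normr_horner_le.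
have -> : A * s ^+ k * expR (- s) = A * (s ^+ k.+2 * expR (- s)) * (t * t).
  rewrite -addn2 exprD expr2.
  transitivity (A * s ^+ k * expR (- s) * ((s * t) * (s * t))); first by rewrite st !mulr1.
  ring.
apply: (@le_trans _ _ (C * (t * t))).
  rewrite ler_wpM2r ?mulr_ge0 ?(ltW t0) // /C ler_wpM2l //.
  by rewrite expRN ler_pdivrMr ?expR_gt0.
have tC : C * t <= e.
  apply: (@le_trans _ _ ((C + 1) * t)); first by rewrite ler_wpM2r ?(ltW t0) // lerDl.
  by rewrite mulrC -ler_pdivlMr ?ltr_wpDl // (ltW te).
by rewrite mulrA ler_wpM2r ?(ltW t0).
Qed.

Definition flat p t := if 0 < t then p.[t^-1] * expR (- t^-1) else 0.

(* [(p (t^-1) * expR (- t^-1))^`() = q (t^-1) * expR (- t^-1)] with [q = 'X^2 * (p - p^`())]. *)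
Definition flat_deriv_poly p : {poly R} := 'X^2 * (p - deriv p).

Lemma is_derive0_flat p : is_derive (0 : R) 1 (flat p) 0.
Proof.
suff Hcvg : (fun h : R => h^-1 *: (flat p (h *: 1 + 0) - flat p 0)) @ 0^' --> (0 : R).
  by apply: DeriveDef; [apply/cvg_ex; exists 0|exact: cvg_lim].
apply/cvgrPdist_le => eps eps0.
have [d d0 Hd] := @horner_inv_expN_le p eps eps0.
near=> h.
have hd : `|h| < d by near: h; apply: dnbhs0_lt.
rewrite /flat ltxx subr0 scaleRE [h *: 1]scaleRE mulr1 addr0 sub0r normrN.
case: ifP => h0; last by rewrite mulr0 normr0 ltW.
have hV0 : 0 <= h^-1 by rewrite invr_ge0 ltW.
rewrite normrM (ger0_norm hV0) ler_pdivrMl // [h * eps]mulrC.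
by apply: Hd; rewrite h0 -(gtr0_norm h0).
Unshelve. all: by end_near. Qed.

Lemma is_derive_flat_gt0 p t : 0 < t -> is_derive t 1 (flat p) (flat (flat_deriv_poly p) t).
Proof.
move=> t0; have tN0 : t != 0 by rewrite gt_eqF.
have Dinv : is_derive t 1 (fun y : R => y^-1) (- t ^- 2).
  apply: is_derive_eq; first exact: (is_deriveV tN0 (is_derive_id _ _)).
  by rewrite scaleRE mulr1.
have Dp : is_derive t 1 (fun y : R => p.[y^-1]) ((deriv p).[t^-1] * (- t ^- 2)).
  exact: (is_derive1_comp (is_derive_poly p t^-1) Dinv).
have Dexp : is_derive t 1 (fun y : R => expR (- y^-1)) (expR (- t^-1) * t ^- 2).
  have DN := @is_deriveN _ _ _ (fun y : R => y^-1) t 1 _ Dinv; rewrite opprK in DN.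
  exact: (is_derive1_comp (is_derive_expR _) DN).
apply: (@near_eq_is_derive _ _ _ (fun y : R => p.[y^-1] * expR (- y^-1))).
  by near=> y; rewrite /flat ifT //; near: y; exact: lt_nbhsr.
apply: (is_derive_eq (is_deriveM Dp Dexp)).
rewrite /flat t0 /flat_deriv_poly hornerM hornerXn !hornerE !scaleRE -exprVn.
ring.
Unshelve. all: by end_near. Qed.

Lemma flat_le0 p t : t <= 0 -> flat p t = 0.
Proof. by move=> t0; rewrite /flat ltNge t0. Qed.

Lemma is_derive_flat_lt0 p t : t < 0 -> is_derive t 1 (flat p) (flat (flat_deriv_poly p) t).
Proof.
move=> t0; apply: (@near_eq_is_derive _ _ _ (fun=> 0)).
  by near=> y; rewrite flat_le0 // ltW //; near: y; exact: lt_nbhsl.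
by rewrite flat_le0 ?ltW //; exact: is_derive_cst.
Unshelve. all: by end_near. Qed.

Lemma is_derive_flat p t : is_derive t 1 (flat p) (flat (flat_deriv_poly p) t).
Proof.
have [t0|t0|->] := ltgtP t 0; [exact: is_derive_flat_lt0|exact: is_derive_flat_gt0|].
by rewrite {2}/flat ltxx; exact: is_derive0_flat.
Qed.

Lemma Cn_flat n p : Cn n (flat p).
Proof.
elim: n p => [|n IH] p /=; first by move=> x; case: (is_derive_flat p x) => /derivable1_continuous.
split=> [x|]; first by case: (is_derive_flat p x).
by rewrite (@derive1_is_derive _ _ (is_derive_flat p)).
Qed.

Lemma flat1_gt0 t : 0 < t -> 0 < flat 1 t.
Proof. by move=> t0; rewrite /flat t0 hornerC mul1r expR_gt0. Qed.

Lemma flat1_ge0 t : 0 <= flat 1 t.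
Proof. by have [/flat1_gt0/ltW //|t0] := ltP 0 t; rewrite flat_le0. Qed.

Definition cutoff t := flat 1 (3 - t) / (flat 1 (3 - t) + flat 1 (t - 2)).

Lemma cutoff_den_gt0 t : 0 < flat 1 (3 - t) + flat 1 (t - 2).
Proof.
have [t3|t3] := ltP t 3.
  by rewrite ltr_pwDl ?flat1_ge0 ?flat1_gt0 ?subr_gt0.
by rewrite ltr_wpDl ?flat1_ge0 ?flat1_gt0 ?subr_gt0 // (lt_le_trans _ t3) ?ltr_nat.
Qed.

Lemma Cn_cutoff n : Cn n cutoff.
Proof.
have Cn_flat_affine a b : Cn n (fun t => flat 1 (a * t + b)).
  exact: (@Cn_comp _ (flat 1) (fun t => a * t + b) (Cn_flat _ _) (Cn_affine _ _ _)).
have C3 : Cn n (fun t => flat 1 (3 - t)).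
  by under eq_fun do rewrite -mulN1r addrC; exact: Cn_flat_affine.
have C2 : Cn n (fun t => flat 1 (t - 2)).
  by under eq_fun do rewrite -[t in t - 2]mul1r; exact: Cn_flat_affine.
apply: CnM => //; apply: CnV; last exact: CnD.
by move=> t; rewrite gt_eqF // cutoff_den_gt0.
Qed.

Lemma cutoff_eq1 t : t <= 2 -> cutoff t = 1.
Proof.
move=> t2; rewrite /cutoff [flat 1 (t - 2)]flat_le0 ?subr_le0 // addr0 divff //.
by rewrite gt_eqF // flat1_gt0 // subr_gt0 (le_lt_trans t2) // ltr_nat.
Qed.

Lemma cutoff_eq0 t : 3 <= t -> cutoff t = 0.
Proof. by move=> t3; rewrite /cutoff flat_le0 ?mul0r // subr_le0. Qed.

Lemma derive1_near_cst f (c y : R) : (\forall z \near y, f z = c) -> derive1 f y = 0.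
Proof. by move=> fc; rewrite derive1E (near_eq_derive _ fc) derive_cst. Qed.

Definition cutoff1 := derive1 cutoff.
Definition cutoff2 := derive1 cutoff1.

Lemma Cn_cutoff1 n : Cn n cutoff1.
Proof. by have [] := Cn_cutoff n.+1. Qed.

Lemma cutoff1_eq0 t : t < 2 \/ 3 < t -> cutoff1 t = 0.
Proof.
case=> [t2|t3]; apply: derive1_near_cst; near=> z.
  by apply: cutoff_eq1; apply: ltW; near: z; exact: lt_nbhsl.
by apply: cutoff_eq0; apply: ltW; near: z; exact: lt_nbhsr.
Unshelve. all: by end_near. Qed.

Lemma cutoff2_eq0 t : t < 2 \/ 3 < t -> cutoff2 t = 0.
Proof.
case=> [t2|t3]; apply: derive1_near_cst; near=> z; apply: cutoff1_eq0.
  by left; near: z; exact: lt_nbhsl.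
by right; near: z; exact: lt_nbhsr.
Unshelve. all: by end_near. Qed.

End OneVariable.

Section TwoVariables.
Context {R : realType}.
Implicit Types (f g u : @pt R -> R) (x v : @pt R).

Lemma derive_line f x v : 'D_v f x = derive1 (fun h : R => f (h *: v + x)) 0.
Proof.
rewrite /derive /derive1.
suff -> : (fun h : R => h^-1 *: (f ((h + 0) *: v + x) - f (0 *: v + x))) =
          (fun h : R => h^-1 *: (f (h *: v + x) - f x)) by [].
by apply: funext => h; rewrite addr0 scale0r add0r.
Qed.

Lemma is_derive_line f x v df :
  is_derive (0 : R) 1 (fun h : R => f (h *: v + x)) df -> is_derive x v f df.
Proof.
move=> [dl <-]; apply: DeriveDef; first exact/derivable1P.
by rewrite derive_line derive1E.
Qed.

Lemma is_derive_scalar_comp (phi : R -> R) u x v du :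
  is_derive x v u du -> derivable phi (u x) 1 ->
  is_derive x v (phi \o u) (derive1 phi (u x) * du).
Proof.
move=> [du1 <-] dphi; apply: is_derive_line.
have dl : derivable (fun h : R => u (h *: v + x)) 0 1 := iffLR (derivable1P u x v) du1.
have ux : u (0 *: v + x) = u x by rewrite scale0r add0r.
have := @is_derive1_comp _ phi _ 0 _ _ _ (derivableP dl).
rewrite ux -derive1E derive_line derive1E; apply.
by rewrite derive1E; apply: derivableP.
Qed.

Lemma is_derive_affine (a b t : R) : is_derive t 1 (fun h : R => h * a + b) a.
Proof.
have DM := @is_deriveM _ _ id (fun=> a) t 1 1 0 (is_derive_id _ _) (is_derive_cst _ _ _).
apply: (is_derive_eq (@is_deriveD _ _ _ _ (fun=> b) t 1 _ 0 DM (is_derive_cst _ _ _))).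
by rewrite scaler0 add0r addr0 scaleRE mulr1.
Qed.

Lemma is_derive_fst x v : is_derive x v (fun y : @pt R => y.1) v.1.
Proof. by apply: is_derive_line; exact: is_derive_affine. Qed.

Lemma is_derive_snd x v : is_derive x v (fun y : @pt R => y.2) v.2.
Proof. by apply: is_derive_line; exact: is_derive_affine. Qed.

Lemma is_derive_mulr {f g x v df dg} : is_derive x v f df -> is_derive x v g dg ->
  is_derive x v (fun y => f y * g y) (f x * dg + g x * df).
Proof. by move=> Hf Hg; exact: (is_derive_eq (is_deriveM Hf Hg)). Qed.

Lemma is_derive_addr {f g x v df dg} : is_derive x v f df -> is_derive x v g dg ->
  is_derive x v (fun y => f y + g y) (df + dg).
Proof. by move=> Hf Hg; exact: (is_derive_eq (is_deriveD Hf Hg)). Qed.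

Lemma is_derive_subr {f g x v df dg} : is_derive x v f df -> is_derive x v g dg ->
  is_derive x v (fun y => f y - g y) (df - dg).
Proof. by move=> Hf Hg; exact: (is_derive_eq (is_deriveB Hf Hg)). Qed.

Lemma is_derive_cstr (k : R) x v : is_derive x v (fun=> k) 0.
Proof. exact: is_derive_cst. Qed.

Fixpoint Cn2 (n : nat) f : Prop :=
  continuous f /\ match n with
                  | 0 => True
                  | n.+1 => (forall b x, derivable f x (dir b)) /\ forall b, Cn2 n (pd b f)
                  end.

Lemma Cn2W n f : Cn2 n.+1 f -> Cn2 n f.
Proof.
elim: n f => [|n IH] f [cf [df Hf]] //=.
by split=> //; split=> // b; apply: IH.
Qed.

Lemma pd_is_derive b f (d : pt -> R) : (forall x, is_derive x (dir b) f (d x)) -> pd b f = d.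
Proof. by move=> H; apply: funext => x; rewrite /pd derive_val. Qed.

Lemma Cn2_cst n (c : R) : Cn2 n (fun=> c).
Proof.
elim: n c => [|n IH] c; split=> //; try by move=> x; apply: cvg_cst.
split=> [b x|b]; first exact: derivable_cst.
by rewrite (@pd_is_derive _ _ (fun=> 0)).
Qed.

Lemma Cn2_fst n : Cn2 n (fun x => x.1).
Proof.
case: n => [|n]; split=> //; try by move=> x; apply: cvg_fst.
split=> [b x|b]; first by case: (is_derive_fst x (dir b)).
suff -> : pd b (fun x => x.1) = fun=> (dir b).1 by exact: Cn2_cst.
by apply: pd_is_derive => x; apply: is_derive_fst.
Qed.

Lemma Cn2_snd n : Cn2 n (fun x => x.2).
Proof.
case: n => [|n]; split=> //; try by move=> x; apply: cvg_snd.
split=> [b x|b]; first by case: (is_derive_snd x (dir b)).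
suff -> : pd b (fun x => x.2) = fun=> (dir b).2 by exact: Cn2_cst.
by apply: pd_is_derive => x; apply: is_derive_snd.
Qed.

Lemma Cn2D n f g : Cn2 n f -> Cn2 n g -> Cn2 n (fun x => f x + g x).
Proof.
elim: n f g => [|n IH] f g [cf Hf] [cg Hg].
  by split=> // x; exact: (continuousD (cf x) (cg x)).
case: Hf Hg => [df Hf] [dg Hg].
split=> [x|]; first exact: (continuousD (cf x) (cg x)).
split=> [b x|b]; first exact: derivableD.
suff -> : pd b (fun x => f x + g x) = (fun x => pd b f x + pd b g x) by exact: IH (Hf b) (Hg b).
by apply: pd_is_derive => x; apply: is_deriveD; apply: derivableP.
Qed.

Lemma Cn2M n f g : Cn2 n f -> Cn2 n g -> Cn2 n (fun x => f x * g x).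
Proof.
elim: n f g => [|n IH] f g Cf Cg; case: (Cf) (Cg) => [cf Hf] [cg Hg].
  by split=> // x; exact: (continuousM (cf x) (cg x)).
case: Hf Hg => [df Hf] [dg Hg].
split=> [x|]; first exact: (continuousM (cf x) (cg x)).
split=> [b x|b]; first exact: derivableM.
suff -> : pd b (fun x => f x * g x) = (fun x => f x * pd b g x + g x * pd b f x).
  by apply: Cn2D; [exact: IH (@Cn2W _ _ Cf) (Hg b)|exact: IH (@Cn2W _ _ Cg) (Hf b)].
apply: pd_is_derive => x.
exact: (is_deriveM (derivableP (df b x)) (derivableP (dg b x))).
Qed.

Lemma Cn2B n f g : Cn2 n f -> Cn2 n g -> Cn2 n (fun x => f x - g x).
Proof.
move=> Cf Cg; under eq_fun do rewrite -mulN1r.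
by apply: Cn2D => //; apply: Cn2M => //; apply: Cn2_cst.
Qed.

Lemma Cn2_comp n (phi : R -> R) u : Cn n phi -> Cn2 n u -> Cn2 n (phi \o u).
Proof.
elim: n phi u => [|n IH] phi u.
  by move=> cphi [cu _]; split=> // x; apply: continuous_comp; [apply: cu|apply: cphi].
move=> [dphi Cphi] Cu; case: (Cu) => cu [du Cpdu].
have D b x := @is_derive_scalar_comp phi u x (dir b) _ (derivableP (du b x)) (dphi (u x)).
split=> [x|]; first by apply: continuous_comp; [apply: cu|apply: derivable1_continuous].
split=> [b x|b]; first by case: (D b x).
rewrite (pd_is_derive _ _ _ (D b)).
exact: (@Cn2M _ (derive1 phi \o u) (pd b u) (IH _ _ Cphi (@Cn2W _ _ Cu)) (Cpdu b)).
Qed.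

Lemma smooth_Cn2 f : (forall n, Cn2 n f) -> smooth f.
Proof.
move=> Cf w; suff Cw n : Cn2 n (iter_pd w f).
  by split; [case: (Cw 0%N)|have [_ []] := Cw 1%N].
elim: w n => [//|b w IH] n /=.
by have [_ [_]] := IH n.+1; apply.
Qed.

Lemma bounded_vanishing_outside f (r : R) :
  continuous f -> (forall y, r < sqn y -> f y = 0) ->
  exists K : R, forall y, `|f y| <= K.
Proof.
move=> cf f0; set s := `|r| + 1.
have Acpt : compact (`[- s, s] `*` `[- s, s]).
  by apply: compact_setX; apply: segment_compact.
have [M [_ HM]] := compact_bounded (continuous_compact (continuous_subspaceT cf) Acpt).
exists (Num.max (M + 1) 0) => y.
have [|] := boolP ((- s <= y.1 <= s) && (- s <= y.2 <= s)).
  move=> /andP[y1 y2]; rewrite le_max; apply/orP; left.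
  by apply: (HM (M + 1)); [rewrite ltrDl|exists y; rewrite //= !in_itv /= y1 y2].
move=> yA; rewrite f0 ?normr0 ?le_max ?lexx ?orbT //.
have s1 : 1 <= s by rewrite lerDr.
have rs : r <= s by rewrite (le_trans (ler_norm r)) // lerDl.
rewrite /sqn; move: yA; rewrite negb_and !negb_and -!ltNge => yA.
by case/orP: yA => /orP[] y_out; nra.
Qed.

End TwoVariables.

Section Construction.
Context {R : realType}.
Variables (c : R) (l : @pt R).
Implicit Types (x v : @pt R).

Definition rsq x := c * sqn x.
Definition wedge x := l.1 * x.2 - l.2 * x.1.

(* [(Phi1, Phi2)] is the rotated gradient [(d_2 psi, - d_1 psi)] of the stream function
   [psi := cutoff (c |x|^2) * (l.1 x.2 - l.2 x.1)]. *)
Definition Phi1 x := cutoff (rsq x) * l.1 + wedge x * (cutoff1 (rsq x) * (2 * c * x.2)).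
Definition Phi2 x := cutoff (rsq x) * l.2 - wedge x * (cutoff1 (rsq x) * (2 * c * x.1)).

Definition Drsq x v := c * (2 * x.1 * v.1 + 2 * x.2 * v.2).
Definition DPhi1 x v := cutoff1 (rsq x) * Drsq x v * l.1
  + ((l.1 * v.2 - l.2 * v.1) * (cutoff1 (rsq x) * (2 * c * x.2))
     + wedge x * (cutoff2 (rsq x) * Drsq x v * (2 * c * x.2) + cutoff1 (rsq x) * (2 * c * v.2))).
Definition DPhi2 x v := cutoff1 (rsq x) * Drsq x v * l.2
  - ((l.1 * v.2 - l.2 * v.1) * (cutoff1 (rsq x) * (2 * c * x.1))
     + wedge x * (cutoff2 (rsq x) * Drsq x v * (2 * c * x.1) + cutoff1 (rsq x) * (2 * c * v.1))).

Lemma is_derive_rsq x v : is_derive x v rsq (Drsq x v).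
Proof.
have -> : rsq = fun y => c * (y.1 * y.1 + y.2 * y.2).
  by apply: funext => y; rewrite /rsq /sqn !expr2.
have Dfst := is_derive_fst x v; have Dsnd := is_derive_snd x v.
apply: (is_derive_eq (is_derive_mulr (is_derive_cstr c x v)
  (is_derive_addr (is_derive_mulr Dfst Dfst) (is_derive_mulr Dsnd Dsnd)))).
by rewrite /Drsq; ring.
Qed.

Lemma is_derive_wedge x v : is_derive x v wedge (l.1 * v.2 - l.2 * v.1).
Proof.
apply: (is_derive_eq (is_derive_subr (is_derive_mulr (is_derive_cstr l.1 x v) (is_derive_snd x v))
                                      (is_derive_mulr (is_derive_cstr l.2 x v) (is_derive_fst x v)))).
by ring.
Qed.

Lemma is_derive_cutoff_rsq x v : is_derive x v (cutoff \o rsq) (cutoff1 (rsq x) * Drsq x v).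
Proof. exact: (@is_derive_scalar_comp _ _ _ _ _ _ (is_derive_rsq x v) (proj1 (Cn_cutoff 1) _)). Qed.

Lemma is_derive_cutoff1_rsq x v : is_derive x v (cutoff1 \o rsq) (cutoff2 (rsq x) * Drsq x v).
Proof. exact: (@is_derive_scalar_comp _ _ _ _ _ _ (is_derive_rsq x v) (proj1 (Cn_cutoff1 1) _)). Qed.

Lemma is_derive_Phi1 x v : is_derive x v Phi1 (DPhi1 x v).
Proof.
have D2cx : is_derive x v (fun y => 2 * c * y.2) (2 * c * v.2).
  by apply: (is_derive_eq (is_derive_mulr (is_derive_cstr _ x v) (is_derive_snd x v))); ring.
apply: (is_derive_eq (is_derive_addr (is_derive_mulr (is_derive_cutoff_rsq x v) (is_derive_cstr l.1 x v))
           (is_derive_mulr (is_derive_wedge x v) (is_derive_mulr (is_derive_cutoff1_rsq x v) D2cx)))).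
by rewrite /DPhi1 /=; ring.
Qed.

Lemma is_derive_Phi2 x v : is_derive x v Phi2 (DPhi2 x v).
Proof.
have D2cx : is_derive x v (fun y => 2 * c * y.1) (2 * c * v.1).
  by apply: (is_derive_eq (is_derive_mulr (is_derive_cstr _ x v) (is_derive_fst x v))); ring.
apply: (is_derive_eq (is_derive_subr (is_derive_mulr (is_derive_cutoff_rsq x v) (is_derive_cstr l.2 x v))
           (is_derive_mulr (is_derive_wedge x v) (is_derive_mulr (is_derive_cutoff1_rsq x v) D2cx)))).
by rewrite /DPhi2 /=; ring.
Qed.

Lemma Cn2_rsq n : Cn2 n rsq.
Proof.
have -> : rsq = fun y => c * (y.1 * y.1 + y.2 * y.2).
  by apply: funext => y; rewrite /rsq /sqn !expr2.
by apply: Cn2M; [apply: Cn2_cst|apply: Cn2D; apply: Cn2M; (apply: Cn2_fst || apply: Cn2_snd)].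
Qed.

Lemma Cn2_wedge n : Cn2 n wedge.
Proof. by apply: Cn2B; apply: Cn2M; (apply: Cn2_cst || apply: Cn2_fst || apply: Cn2_snd). Qed.

Lemma Cn2_Phi1 n : Cn2 n Phi1.
Proof.
apply: Cn2D; first by apply: Cn2M; [apply: Cn2_comp; [apply: Cn_cutoff|apply: Cn2_rsq]|apply: Cn2_cst].
apply: Cn2M; first exact: Cn2_wedge.
apply: Cn2M; first by apply: Cn2_comp; [apply: Cn_cutoff1|apply: Cn2_rsq].
by apply: Cn2M; [apply: Cn2_cst|apply: Cn2_snd].
Qed.

Lemma Cn2_Phi2 n : Cn2 n Phi2.
Proof.
apply: Cn2B; first by apply: Cn2M; [apply: Cn2_comp; [apply: Cn_cutoff|apply: Cn2_rsq]|apply: Cn2_cst].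
apply: Cn2M; first exact: Cn2_wedge.
apply: Cn2M; first by apply: Cn2_comp; [apply: Cn_cutoff1|apply: Cn2_rsq].
by apply: Cn2M; [apply: Cn2_cst|apply: Cn2_fst].
Qed.

Lemma pd_Phi1 b x : pd b Phi1 x = DPhi1 x (dir b).
Proof. by rewrite /pd; case: (is_derive_Phi1 x (dir b)). Qed.

Lemma pd_Phi2 b x : pd b Phi2 x = DPhi2 x (dir b).
Proof. by rewrite /pd; case: (is_derive_Phi2 x (dir b)). Qed.

Lemma div_Phi x : pd true Phi1 x + pd false Phi2 x = 0.
Proof. by rewrite pd_Phi1 pd_Phi2 /DPhi1 /DPhi2 /Drsq /wedge /=; ring. Qed.

Lemma Phi_eq_l x : c <= 1 -> sqn x = 1 -> (Phi1 x, Phi2 x) = l.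
Proof.
move=> c1 x1; have rsq_lt2 : rsq x < 2 by rewrite /rsq x1 mulr1 (le_lt_trans c1) // ltr1n.
rewrite /Phi1 /Phi2 cutoff_eq1 ?ltW // cutoff1_eq0; last by left.
by rewrite !mul0r mulr0 addr0 subr0 !mul1r -surjective_pairing.
Qed.

Lemma Phi_eq0 x : 0 < c -> 3 / c < sqn x -> (Phi1 x, Phi2 x) = (0, 0).
Proof.
move=> c0 x3; have rsq_gt3 : 3 < rsq x by rewrite /rsq mulrC -ltr_pdivrMr.
rewrite /Phi1 /Phi2 cutoff_eq0 ?ltW // cutoff1_eq0; last by right.
by rewrite !mul0r mulr0 addr0 subr0.
Qed.

End Construction.

Section Rescaling.
Context {R : realType} (l : @pt R).

Definition Psi_eps (eps : R) (x : @pt R) : @pt R :=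
  (Phi1 (eps ^+ 2) l x, Phi2 (eps ^+ 2) l x).

Lemma pd_Psi_eps_scale eps x i j :
  pd j (vcomp i (Psi_eps eps)) x = eps * pd j (vcomp i (Psi_eps 1)) (eps *: x).
Proof.
have rsq_scale : rsq (eps ^+ 2) x = rsq (1 ^+ 2) (eps *: x) by rewrite /rsq /sqn /= !scaleRE; ring.
case: i; rewrite ?pd_Phi1 ?pd_Phi2 /DPhi1 /DPhi2 /Drsq /wedge rsq_scale /= !scaleRE; ring.
Qed.

Lemma smooth_Psi_eps eps i : smooth (vcomp i (Psi_eps eps)).
Proof. by case: i; apply: smooth_Cn2 => n; [apply: Cn2_Phi1|apply: Cn2_Phi2]. Qed.

Lemma pd_Psi_1_bounded :
  exists K : R, forall y i j, `|pd j (vcomp i (Psi_eps 1)) y| <= K.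
Proof.
have B i j : exists K : R, forall y, `|pd j (vcomp i (Psi_eps 1)) y| <= K.
  apply: (@bounded_vanishing_outside _ _ 3); first exact: (proj1 (smooth_Psi_eps 1 i [:: j])).
  move=> y y3; have rsq3 : 3 < rsq (1 ^+ 2) y by rewrite /rsq expr1n mul1r.
  have [c1 c2] : cutoff1 (rsq (1 ^+ 2) y) = 0 /\ cutoff2 (rsq (1 ^+ 2) y) = 0.
    by split; [apply: cutoff1_eq0|apply: cutoff2_eq0]; right.
  by case: i; rewrite ?pd_Phi1 ?pd_Phi2 /DPhi1 /DPhi2 c1 c2; ring.
have [K1 B1] := B true true; have [K2 B2] := B true false.
have [K3 B3] := B false true; have [K4 B4] := B false false.
exists (Num.max (Num.max K1 K2) (Num.max K3 K4)); move=> y i j.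
case: i; case: j;
  [apply: le_trans (B1 y) _|apply: le_trans (B2 y) _|apply: le_trans (B3 y) _|apply: le_trans (B4 y) _];
  by rewrite !le_max lexx ?orbT.
Qed.

End Rescaling.

Theorem lemma9 (R : realType) (Psi : @pt R -> @pt R) (l : @pt R) :
  in_H Psi ->
  {ae leb2, forall x, S0 x -> Psi x = l} ->
  exists Psit : R -> @pt R -> @pt R,
    (forall eps : R, 0 < eps <= 1 ->
       (forall i, smooth (vcomp i (Psit eps))) /\
       (exists M : R, forall x, F0cl x -> M < sqn x -> Psit eps x = (0, 0)) /\
       (forall x, F0cl x ->
          pd true (vcomp true (Psit eps)) x + pd false (vcomp false (Psit eps)) x = 0) /\
       (forall x, sqn x = 1 -> Psit eps x = l)) /\
    (forall e : R, 0 < e -> exists d : R, 0 < d /\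
       forall eps : R, 0 < eps <= 1 -> eps < d ->
         forall x, F0 x -> forall i j : bool, `| pd j (vcomp i (Psit eps)) x | <= e).
Proof.
move=> _ _; exists (Psi_eps l); split.
  move=> eps /andP[eps0 eps1]; split; first exact: smooth_Psi_eps.
  split; first by exists (3 / eps ^+ 2) => x _; apply: Phi_eq0; rewrite exprn_gt0.
  split; first by move=> x _; apply: div_Phi.
  by move=> x x1; apply: Phi_eq_l => //; rewrite expr_le1 // ltW.
move=> e e0; have [K HK] := pd_Psi_1_bounded l.
have K0 : 0 <= K := le_trans (normr_ge0 _) (HK 0 true true).
exists (e / (K + 1)); split; first by rewrite divr_gt0 ?ltr_wpDl.
move=> eps /andP[eps0 _] eps_small x _ i j.
rewrite pd_Psi_eps_scale normrM gtr0_norm //.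
apply: le_trans (ler_wpM2l (ltW eps0) (HK _ i j)) _.
rewrite ltr_pdivlMr ?ltr_wpDl // in eps_small; nra.
Qed.
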